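(* Let $\Gamma=(\rho_0,\dots,\rho_{n-1})$ be a context with every $\rho_k\in\mathrm{Type}^+\cup\mathrm{Type}^-$, let $\Gamma\vdash r:\rho$ be a typed term, and let $C=(i_0,\dots,i_{n-1})$ with $i_k\in I_{\rho_k}$ and $i\in I_\rho$ be such that the state judgement $C\vdash r:i$ is derivable. If $\vec A\in\llbracket\Gamma\rrbracket$ and $\vec a\in\llbracket\Gamma\rrbracket_C$ satisfy $\vec A\triangleright\vec a$ (i.e. $A_k\triangleright a_k$ for all $k<n$), then $\llbracket r\rrbracket_{\vec A}\triangleright\llbracket r\rrbracket^i_{\vec a:C}$ (where $\llbracket r\rrbracket^i_{\vec a:C}$ is computed along any derivation of $C\vdash r:i$).
   Context: Systems and factor systems: for a non-empty directed preordered set $I$, a system consists of pairwise disjoint sets $M_i$ ($i\in I$) and relations $\triangleright\subseteq M_{i'}\times M_i$ ($i\le i'$), reflexive for $i=i'$; $a_i\approx b_j$ iff some $c\in M_{i'}$, $i'\ge i,j$, has $c\triangleright a_i,c\triangleright b_j$; prefactor system: $a_{i'}\approx a_i\iff a_{i'}\triangleright a_i$. A factor system is a prefactor system with $\approx$-preserving $emb_{i,i'}:M_i\to M_{i'}$, $proj_{i',i}:M_{i'}\to M_i$ with $emb_{i,i}(a)\approx a$, $proj_{i,i}(a)\approx a$, $emb_{i',i''}\circ emb_{i,i'}(a)\approx emb_{i,i''}(a)$, $proj_{i',i}\circ proj_{i'',i'}(a)\approx proj_{i'',i}(a)$, $proj_{i',i}(emb_{i,i'}(a))\approx a$, and $a_{i'}\triangleright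 a_i\Rightarrow emb_{i',i''}(a_{i'})\triangleright a_i$, $a_{i''}\triangleright a_i\Rightarrow proj_{i'',i'}(a_{i''})\triangleright a_i$ ($i\le i'\le i''$); it is direct iff $a_{i'}\triangleright a_i\iff a_{i'}\approx emb_{i,i'}(a_i)$. Filters: for each such $I$ a family $\mathcal F(I)$ of cofinal subsets, closed under supersets and finite intersections, containing all non-empty up-sets; standing Condition (D): $H\in\mathcal F(I\times J)$, $I'\in\mathcal F(I)$ imply $\{j\mid\exists i\in I',(i,j)\in H\}\in\mathcal F(J)$. A target for $M_I$: a set $M$ with relation $a\triangleright a_i$ with $\{i\mid\exists a_i,a\triangleright a_i\}\in\mathcal F(I)$ and $a\triangleright a_{i'},a\triangleright a_i\Rightarrow a_{i'}\triangleright a_i$; a limit is a target $M$ such that every target $N$ admits a unique $\Phi:N\to M$ with $b\triangleright a_i\Rightarrow\Phi(b)\triangleright a_i$. Function space $[M_I\to N_J]$: indices $i\to j\in I\times J$, states = $\approx$-preserving functions $M_i\to N_j$, $f'\triangleright f$ iff $a_{i'}\triangleright a_i\Rightarrow f'(a_{i'})\triangleright f(a_i)$, embeddings $f\mapsto emb_{j,j'}\circ f\circ proj_{i',i}$, projections $f'\mapsto proj_{j',j}\circ f'\circ emb_{i,i'}$. For targets: $[M\to_{\mathcal F}N]=\{f:M\to N\mid I_f\in\mathcal F(I\times J)\}$, $f\triangleright f_{i\to j}$ iff $a\triangleright a_i\Rightarrow f(a)\triangleright f_{i\to j}(a_i)$, $I_f=\{i\to j\mid\exists f_{i\to j},f\triangleright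 f_{i\to j}\}$. Types $\rho::=\iota\mid\rho\to\rho$ over base types including $\mathsf{prop}$; $\mathrm{Type}^+\ni\rho^+::=\iota\mid\rho^-\to\rho^+$, $\mathrm{Type}^-\ni\rho^-::=\mathsf{prop}\mid\rho^+\to\rho^-$. Index sets: non-empty directed $I_\rho$, $I_{\mathsf{prop}}=\{\mathsf{prop}\}$, $I_{\rho\to\sigma}=I_\rho\times I_\sigma$ (elements written $i\to j$). Interpretation of types: each $\rho$ gets a factor system $(\llbracket\rho\rrbracket_i)_{i\in I_\rho}$ and a limit $\llbracket\rho\rrbracket$; base types get direct factor systems; $\mathsf{prop}$ gets the one-index system with state $\{true,false\}$ and limit $\{true,false\}$, all relations being equality; $\rho\to\sigma$ gets the function space $[(\llbracket\rho\rrbracket_i)\to(\llbracket\sigma\rrbracket_j)]$ with limit $[\llbracket\rho\rrbracket\to_{\mathcal F}\llbracket\sigma\rrbracket]$. For $\Gamma=(\rho_0,\dots,\rho_{n-1})$: $\llbracket\Gamma\rrbracket=\prod_k\llbracket\rho_k\rrbracket$ and $\llbracket\Gamma\rrbracket_C=\prod_k\llbracket\rho_k\rrbracket_{i_k}$ for $C=(i_0,\dots,i_{n-1})$. Terms (variables $x_0,x_1,\dots$): $r::=x_k\mid rr\mid\lambda x_k^\rho r$. Typing: $\Gamma\vdash x_k:\rho_k$ ($k<n$); from $\Gamma\vdash r:\rho\to\sigma$, $\Gamma\vdash s:\rho$ infer $\Gamma\vdash rs:\sigma$; from $\Gamma.\rho\vdash r:\sigma$ (context extended by $\rho$ as $x_n$)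 infer $\Gamma\vdash\lambda x_n^\rho r:\rho\to\sigma$. State judgements (following the typing derivation, with $C.i$ the extension of $C$ by $i$): $C\vdash x_k:j$ if $\rho_k\in\mathrm{Type}^+$ and $j\ge i_k$, or if $\rho_k\in\mathrm{Type}^-$ and $j\le i_k$; from $C\vdash r:i\to j$ and $C\vdash s:i$ infer $C\vdash rs:j$; from $C.i\vdash r:j$ infer $C\vdash\lambda x_n^\rho r:i\to j$. Limit values: $\llbracket x_k\rrbracket_{\vec A}=A_k$, $\llbracket rs\rrbracket_{\vec A}=\llbracket r\rrbracket_{\vec A}(\llbracket s\rrbracket_{\vec A})$, $\llbracket\lambda x_n^\rho r\rrbracket_{\vec A}(B)=\llbracket r\rrbracket_{\vec A.B}$. State values, defined on the derivation of $C\vdash r:i$: $\llbracket x_k\rrbracket^j_{\vec a:C}=emb_{i_k,j}(a_k)$ if $\rho_k\in\mathrm{Type}^+$, $=proj_{i_k,j}(a_k)$ if $\rho_k\in\mathrm{Type}^-$; $\llbracket rs\rrbracket^j_{\vec a:C}=\llbracket r\rrbracket^{i\to j}_{\vec a:C}(\llbracket s\rrbracket^i_{\vec a:C})$; $\llbracket\lambda x_n^\rho r\rrbracket^{i\to j}_{\vec a:C}(b)=\llbracket r\rrbracket^j_{\vec a.b:C.i}$ for $b\in\llbracket\rho\rrbracket_i$. *)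

From mathcomp Require Import ssreflect ssrfun ssrbool eqtype ssrnat seq.
Set Implicit Arguments. Unset Strict Implicit. Unset Printing Implicit Defensive.

Record preord := Preord { pcar :> Type; ple : pcar -> pcar -> Prop }.
Arguments ple {p}.

Definition is_dpo (I : preord) : Prop :=
  (forall i : I, ple i i) /\
  (forall i j k : I, ple i j -> ple j k -> ple i k) /\
  inhabited I /\
  (forall i j : I, exists k, ple i k /\ ple j k).

(* product (componentwise) preorder, written i -> j in the paper *)
Definition prodp (I J : preord) : preord :=
  @Preord (I * J)%type (fun x y => ple x.1 y.1 /\ ple x.2 y.2).

Definition unitp : preord := @Preord unit (fun _ _ => True).

(* Systems.  M_i is presented as { a : st i | sin a } (setoid style).  *)
(* tr a' a  means  a' |> a  (a' in M_i', a in M_i).                    *)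
Record rsys (I : preord) := RSys {
  st : I -> Type;
  sin : forall i, st i -> Prop;
  tr : forall i i', st i' -> st i -> Prop;
  emb : forall i i', ple i i' -> st i -> st i';
  proj : forall i i', ple i i' -> st i' -> st i }.
Arguments st {I} _ i.
Arguments sin {I _ i}.
Arguments tr {I _ i i'}.
Arguments emb {I _ i i'}.
Arguments proj {I _ i i'}.

Section Sys.
Variables (I : preord) (S : rsys I).

Definition approx (i j : I) (a : st S i) (b : st S j) : Prop :=
  exists (k : I) (c : st S k), sin c /\ ple i k /\ ple j k /\ tr c a /\ tr c b.

Definition is_system : Prop :=
  (forall i i' (a' : st S i') (a : st S i), sin a' -> sin a -> tr a' a -> ple i i') /\
  (forall i (a : st S i), sin a -> tr a a).

Definition is_prefactor : Prop :=
  is_system /\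
  forall i i' (a' : st S i') (a : st S i), ple i i' -> sin a' -> sin a ->
    (approx a' a <-> tr a' a).

Definition approx_pres (i j : I) (f : st S i -> st S j) : Prop :=
  (forall a, sin a -> sin (f a)) /\
  (forall a b, sin a -> sin b -> approx a b -> approx (f a) (f b)).

Definition is_factor : Prop :=
  is_prefactor /\
  (forall i i' (p : ple i i'), approx_pres (emb p)) /\
  (forall i i' (p : ple i i'), approx_pres (proj p)) /\
  (forall i (p : ple i i) (a : st S i), sin a -> approx (emb p a) a) /\
  (forall i (p : ple i i) (a : st S i), sin a -> approx (proj p a) a) /\
  (forall i i' i'' (p : ple i i') (q : ple i' i'') (r : ple i i'') (a : st S i),
      sin a -> approx (emb q (emb p a)) (emb r a)) /\
  (forall i i' i'' (p : ple i i') (q : ple i' i'') (r : ple i i'') (a : st S i''),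
      sin a -> approx (proj p (proj q a)) (proj r a)) /\
  (forall i i' (p q : ple i i') (a : st S i), sin a -> approx (proj q (emb p a)) a) /\
  (forall i i' i'' (p : ple i' i'') (a' : st S i') (a : st S i),
      ple i i' -> sin a' -> sin a -> tr a' a -> tr (emb p a') a) /\
  (forall i i' i'' (p : ple i' i'') (a'' : st S i'') (a : st S i),
      ple i i' -> sin a'' -> sin a -> tr a'' a -> tr (proj p a'') a).

Definition is_direct : Prop :=
  is_factor /\
  forall i i' (p : ple i i') (a' : st S i') (a : st S i), sin a' -> sin a ->
    (tr a' a <-> approx a' (emb p a)).
End Sys.

Definition funsp (I J : preord) (M : rsys I) (N : rsys J) : rsys (prodp I J) :=
  @RSys (prodp I J)
    (fun ij => st M ij.1 -> st N ij.2)
    (fun ij f => (forall a, sin a -> sin (f a)) /\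
                 (forall a b, sin a -> sin b -> approx a b -> approx (f a) (f b)))
    (fun ij ij' f' f => ple ij.1 ij'.1 /\ ple ij.2 ij'.2 /\
                 forall (a' : st M ij'.1) (a : st M ij.1),
                   sin a' -> sin a -> tr a' a -> tr (f' a') (f a))
    (fun ij ij' (p : ple ij.1 ij'.1 /\ ple ij.2 ij'.2) f =>
        fun a => emb (proj2 p) (f (proj (proj1 p) a)))
    (fun ij ij' (p : ple ij.1 ij'.1 /\ ple ij.2 ij'.2) f' =>
        fun a => proj (proj2 p) (f' (emb (proj1 p) a))).

Definition filter_family := forall I : preord, (I -> Prop) -> Prop.

Definition is_filter_family (F : filter_family) : Prop :=
  forall I : preord, is_dpo I ->
    (forall H, F I H -> forall i : I, exists h, H h /\ ple i h) /\
    (forall H H' : I -> Prop, F I H -> (forall x, H x -> H' x) -> F I H') /\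
    (forall H H' : I -> Prop, F I H -> F I H' -> F I (fun x => H x /\ H' x)) /\
    (forall U : I -> Prop, (exists u, U u) -> (forall u v, U u -> ple u v -> U v) -> F I U).

Definition condD (F : filter_family) : Prop :=
  forall I J : preord, is_dpo I -> is_dpo J ->
  forall (H : prodp I J -> Prop) (I' : I -> Prop),
    F (prodp I J) H -> F I I' -> F J (fun j => exists i, I' i /\ H (i, j)).

(* a candidate target: set { x : lcar | lin x } with relation x |> a_i *)
Record rlim (I : preord) (S : rsys I) := RLim {
  lcar : Type;
  lin : lcar -> Prop;
  ltr : forall i, lcar -> st S i -> Prop }.
Arguments lcar {I S} _.
Arguments lin {I S _}.
Arguments ltr {I S} _ {i}.

Definition is_target (F : filter_family) (I : preord) (S : rsys I) (L : rlim S) : Prop :=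
  forall x : lcar L, lin x ->
    F I (fun i => exists a : st S i, sin a /\ ltr L x a) /\
    (forall i i' (a' : st S i') (a : st S i), ple i i' -> sin a' -> sin a ->
        ltr L x a' -> ltr L x a -> tr a' a).

Definition is_limit (F : filter_family) (I : preord) (S : rsys I) (L : rlim S) : Prop :=
  is_target F L /\
  forall N : rlim S, is_target F N ->
    exists Phi : lcar N -> lcar L,
      ((forall y, lin y -> lin (Phi y)) /\
       (forall y i (a : st S i), lin y -> sin a -> ltr N y a -> ltr L (Phi y) a)) /\
      (forall Psi : lcar N -> lcar L,
         (forall y, lin y -> lin (Psi y)) ->
         (forall y i (a : st S i), lin y -> sin a -> ltr N y a -> ltr L (Psi y) a) ->
         forall y, lin y -> Psi y = Phi y).

Definition funlim (F : filter_family) (I J : preord) (M : rsys I) (N : rsys J)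
    (LM : rlim M) (LN : rlim N) : rlim (funsp M N) :=
  @RLim (prodp I J) (funsp M N)
    (lcar LM -> lcar LN)
    (fun f => (forall x, lin x -> lin (f x)) /\
       F (prodp I J) (fun ij => exists g : st (funsp M N) ij, sin g /\
            forall (x : lcar LM) (a : st M ij.1), lin x -> sin a -> ltr LM x a ->
              ltr LN (f x) (g a)))
    (fun ij f g => forall (x : lcar LM) (a : st M ij.1), lin x -> sin a -> ltr LM x a ->
              ltr LN (f x) (g a)).

Inductive ty (B : Type) := tprop | tbase (b : B) | tarr (s t : ty B).
Arguments tprop {B}.

Inductive tpos {B} : ty B -> Prop :=
| pos_prop : tpos tprop
| pos_base b : tpos (tbase b)
| pos_arr s t : tneg s -> tpos t -> tpos (tarr s t)
with tneg {B} : ty B -> Prop :=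
| neg_prop : tneg tprop
| neg_arr s t : tpos s -> tneg t -> tneg (tarr s t).

(* variables x_k (k = position in context); lam k rho r is  \x_k^rho. r *)
Inductive tm (B : Type) := var (k : nat) | app (r s : tm B) | lam (k : nat) (rho : ty B) (r : tm B).
Arguments var {B}.

Section HList.
Variable B : Type.
Variable P : ty B -> Type.

Fixpoint hlist (G : seq (ty B)) : Type :=
  match G with [::] => unit | rho :: G' => (P rho * hlist G')%type end.

Fixpoint hnth (d : P tprop) (G : seq (ty B)) : hlist G -> forall k, P (nth tprop G k) :=
  match G return hlist G -> forall k, P (nth tprop G k) with
  | [::] => fun _ k => match k return P (nth tprop [::] k) with 0 => d | _.+1 => d end
  | rho :: G' => fun h k =>
      match k return P (nth tprop (rho :: G') k) with
      | 0 => h.1 | k'.+1 => hnth d h.2 k' end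
  end.

Fixpoint hsnoc (G : seq (ty B)) (rho : ty B) : hlist G -> P rho -> hlist (rcons G rho) :=
  match G return hlist G -> P rho -> hlist (rcons G rho) with
  | [::] => fun _ x => (x, tt)
  | a :: G' => fun h x => (h.1, hsnoc h.2 x)
  end.

Variable Q : forall rho, P rho -> Type.

Fixpoint dhlist (G : seq (ty B)) : hlist G -> Type :=
  match G return hlist G -> Type with
  | [::] => fun _ => unit
  | rho :: G' => fun C => (Q C.1 * dhlist C.2)%type
  end.

Fixpoint dnth (d : P tprop) (dd : Q d) (G : seq (ty B)) :
    forall C : hlist G, dhlist C -> forall k, Q (hnth d C k) :=
  match G return forall C : hlist G, dhlist C -> forall k, Q (hnth d C k) with
  | [::] => fun C _ k => match k return Q (hnth d C k) with 0 => dd | _.+1 => dd end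
  | rho :: G' => fun C h k =>
      match k return Q (hnth d C k) with
      | 0 => h.1 | k'.+1 => dnth dd h.2 k' end
  end.

Fixpoint dsnoc (G : seq (ty B)) (rho : ty B) :
    forall C : hlist G, dhlist C -> forall (i : P rho), Q i -> dhlist (hsnoc C i) :=
  match G return forall C : hlist G, dhlist C -> forall (i : P rho), Q i -> dhlist (hsnoc C i) with
  | [::] => fun _ _ i x => (x, tt)
  | a :: G' => fun C h i x => (h.1, dsnoc h.2 x)
  end.
End HList.

Inductive typing {B : Type} : seq (ty B) -> tm B -> ty B -> Type :=
| ty_var G k : k < size G -> typing G (var k) (nth tprop G k)
| ty_app G r s rho sig : typing G r (tarr rho sig) -> typing G s rho -> typing G (app r s) sig
| ty_lam G rho r sig : typing (rcons G rho) r sig -> typing G (lam (size G) rho r) (tarr rho sig).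

Section Interp.
Variable B : Type.
Variable IB : B -> preord.

Fixpoint Ity (t : ty B) : preord :=
  match t with
  | tprop => unitp
  | tbase b => IB b
  | tarr s u => prodp (Ity s) (Ity u)
  end.

Definition CI (G : seq (ty B)) := hlist (fun t => pcar (Ity t)) G.
Definition cnth G (C : CI G) k : Ity (nth tprop G k) := hnth (P := fun t => pcar (Ity t)) tt C k.
Definition csnoc G rho (C : CI G) (i : Ity rho) : CI (rcons G rho) :=
  hsnoc (P := fun t => pcar (Ity t)) C i.

Inductive sder : forall G : seq (ty B), CI G -> tm B -> forall rho : ty B, Ity rho -> Type :=
| sd_var_pos G (C : CI G) k (j : Ity (nth tprop G k)) :
    k < size G -> tpos (nth tprop G k) -> ple (cnth C k) j -> sder C (var k) j
| sd_var_neg G (C : CI G) k (j : Ity (nth tprop G k)) :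
    k < size G -> tneg (nth tprop G k) -> ple j (cnth C k) -> sder C (var k) j
| sd_app G (C : CI G) r s rho sig (i : Ity rho) (j : Ity sig) :
    @sder G C r (tarr rho sig) (i, j) -> sder C s i -> sder C (app r s) j
| sd_lam G (C : CI G) rho r sig (i : Ity rho) (j : Ity sig) :
    sder (csnoc C i) r j -> @sder G C (lam (size G) rho r) (tarr rho sig) (i, j).

Variable BS : forall b, rsys (IB b).

Definition propS : rsys unitp :=
  @RSys unitp (fun _ => bool) (fun _ _ => True) (fun _ _ a' a => a' = a)
    (fun _ _ _ a => a) (fun _ _ _ a => a).

Fixpoint semS (t : ty B) : rsys (Ity t) :=
  match t return rsys (Ity t) with
  | tprop => propS
  | tbase b => BS b
  | tarr s u => funsp (semS s) (semS u)
  end.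

Variable BL : forall b, rlim (BS b).
Variable F : filter_family.

Definition propL : rlim propS := @RLim unitp propS bool (fun _ => True) (fun _ x a => x = a).

Fixpoint semL (t : ty B) : rlim (semS t) :=
  match t return rlim (semS t) with
  | tprop => propL
  | tbase b => BL b
  | tarr s u => funlim F (semL s) (semL u)
  end.

Definition SE G (C : CI G) := dhlist (fun t (i : pcar (Ity t)) => st (semS t) i) C.
Definition snth G (C : CI G) (a : SE C) k : st (semS (nth tprop G k)) (cnth C k) :=
  dnth (Q := fun t (i : pcar (Ity t)) => st (semS t) i) (d := tt) true a k.
Definition ssnoc G rho (C : CI G) (a : SE C) (i : Ity rho) (b : st (semS rho) i)
  : SE (csnoc C i) := dsnoc (Q := fun t (i : pcar (Ity t)) => st (semS t) i) a b.

Definition LE G := hlist (fun t => lcar (semL t)) G.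
Definition lnth G (A : LE G) k : lcar (semL (nth tprop G k)) :=
  hnth (P := fun t => lcar (semL t)) true A k.
Definition lsnoc G rho (A : LE G) (x : lcar (semL rho)) : LE (rcons G rho) :=
  hsnoc (P := fun t => lcar (semL t)) A x.

Fixpoint sv G (C : CI G) r rho (i : Ity rho) (D : sder C r i) : SE C -> st (semS rho) i :=
  match D in @sder G C r rho i return SE C -> st (semS rho) i with
  | sd_var_pos G C k j _ _ p => fun a => emb p (snth a k)
  | sd_var_neg G C k j _ _ p => fun a => proj p (snth a k)
  | sd_app G C r s rho sig i j D1 D2 => fun a => sv D1 a (sv D2 a)
  | sd_lam G C rho r sig i j D1 => fun a b => sv D1 (ssnoc a b)
  end.

Fixpoint lv G r rho (T : typing G r rho) : LE G -> lcar (semL rho) :=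
  match T in typing G r rho return LE G -> lcar (semL rho) with
  | ty_var G k _ => fun A => lnth A k
  | ty_app G r s rho sig T1 T2 => fun A => lv T1 A (lv T2 A)
  | ty_lam G rho r sig T1 => fun A x => lv T1 (lsnoc A x)
  end.
End Interp.

From mathcomp Require Import ssreflect ssrfun ssrbool eqtype ssrnat seq.
From Stdlib Require Import Classical_Prop Program.Equality.
Set Implicit Arguments. Unset Strict Implicit. Unset Printing Implicit Defensive.

(* By induction on the typing derivation, [lv T A] and [sv D a] are related by
   a logical relation [lrel] which at polar types is the limit relation [ltr]
   itself.  Variables are handled by monotonicity: [ltr] is preserved by
   embeddings at positive types and by projections at negative types, which
   at base types rests on directness (the limit relation of a direct system
   is closed under [approx]).  What remains is the filter condition of
   [funlim] for the limit value of an abstraction of polar type.  At a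
   positive type [rho -> sig] it holds on the up-set of the index of the given
   derivation, by embedding its state value.  At a negative type it holds
   everywhere: the indices at which a term becomes derivable once the
   negative-only context variables are raised within the (cofinal) filter
   sets of their limit values form a "large", hence cofinal, set, and
   derivations at a negative type may be lowered. *)

Section Preorders.
Variable I : preord.

Definition cofinal (P : I -> Prop) := forall i : I, exists j, ple i j /\ P j.

Hypothesis dI : is_dpo I.

Lemma dpo_refl (i : I) : ple i i.
Proof. by case: dI => h _; apply: h. Qed.

Lemma dpo_trans (i j k : I) : ple i j -> ple j k -> ple i k.
Proof. by case: dI => _ [h _]; apply: h. Qed.

Lemma dpo_ub (i j : I) : exists k, ple i k /\ ple j k.
Proof. by case: dI => _ [_ [_ h]]; apply: h. Qed.

Lemma dpo_inhabited : inhabited I.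
Proof. by case: dI => _ [_ []]. Qed.

Lemma cofinal_exists (P : I -> Prop) : cofinal P -> exists x, P x.
Proof. by case: dpo_inhabited => x /(_ x) [j [_ Pj]]; exists j. Qed.
End Preorders.

Lemma dpo_prod (I J : preord) : is_dpo I -> is_dpo J -> is_dpo (prodp I J).
Proof.
move=> dI dJ; split; [|split; [|split]].
- by move=> [x y]; split; apply: dpo_refl.
- by move=> [x1 y1] [x2 y2] [x3 y3] [/= h1 h2] [/= h3 h4]; split; apply: dpo_trans; eauto.
- by case: (dpo_inhabited dI) => x; case: (dpo_inhabited dJ) => y; constructor; exact: (x, y).
- move=> [x1 y1] [x2 y2]; have [x [h1 h2]] := dpo_ub dI x1 x2.
  by have [y [h3 h4]] := dpo_ub dJ y1 y2; exists (x, y).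
Qed.

Lemma dpo_unit : is_dpo unitp.
Proof.
split; [done | split; [done | split]]; first by constructor; exact: tt.
by move=> ? ?; exists tt.
Qed.

Section Filters.
Variables (F : filter_family) (I : preord).
Hypotheses (HF : is_filter_family F) (dI : is_dpo I).

Lemma filter_cofinal (P : I -> Prop) : @F I P -> cofinal P.
Proof. by case: (HF dI) => hcof _ /hcof hP i; have [j []] := hP i; exists j. Qed.

Lemma filter_weaken (P P' : I -> Prop) : @F I P -> (forall x, P x -> P' x) -> @F I P'.
Proof. by case: (HF dI) => _ [hsup _]; apply: hsup. Qed.

Lemma filter_up (i : I) : @F I (ple i).
Proof.
case: (HF dI) => _ [_ [_ hup]]; apply: hup; first by exists i; apply: dpo_refl.
by move=> u v; apply: dpo_trans.
Qed.

Lemma filter_full : @F I (fun _ => True).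
Proof. by case: (dpo_inhabited dI) => i; apply: filter_weaken (filter_up i) _. Qed.
End Filters.

Section Systems.
Variables (I : preord) (S : rsys I).

Lemma approx_sym i j (a : st S i) (b : st S j) : approx a b -> approx b a.
Proof. by case=> k [c [? [? [? [? ?]]]]]; exists k, c. Qed.

(* [is_factor] without its coherence laws for composites of embeddings and
   projections, which the argument never uses, plus directedness. *)
Record wf_system : Prop := WfSystem {
  wf_dpo : is_dpo I;
  wf_tr_refl : forall i (a : st S i), sin a -> tr a a;
  wf_tr_le : forall i i' (a' : st S i') (a : st S i), sin a' -> sin a -> tr a' a -> ple i i';
  wf_approx_tr : forall i i' (a' : st S i') (a : st S i), ple i i' -> sin a' -> sin a ->
     (approx a' a <-> tr a' a);
  wf_emb_in : forall i i' (p : ple i i') (a : st S i), sin a -> sin (emb p a);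
  wf_proj_in : forall i i' (p : ple i i') (a : st S i'), sin a -> sin (proj p a);
  wf_emb_approx : forall i i' (p : ple i i') (a b : st S i), sin a -> sin b -> approx a b ->
     approx (emb p a) (emb p b);
  wf_proj_approx : forall i i' (p : ple i i') (a b : st S i'), sin a -> sin b -> approx a b ->
     approx (proj p a) (proj p b);
  wf_tr_emb : forall i i' i'' (p : ple i' i'') (a' : st S i') (a : st S i),
     ple i i' -> sin a' -> sin a -> tr a' a -> tr (emb p a') a;
  wf_tr_proj : forall i i' i'' (p : ple i' i'') (a'' : st S i'') (a : st S i),
     ple i i' -> sin a'' -> sin a -> tr a'' a -> tr (proj p a'') a }.

Hypothesis HS : wf_system.

Lemma tr_approx i i' (a' : st S i') (a : st S i) : sin a' -> sin a -> tr a' a -> approx a' a.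
Proof. by move=> sa' sa h; apply/(wf_approx_tr HS) => //; apply: (wf_tr_le HS) h. Qed.

Lemma approx_tr i (a b : st S i) : sin a -> sin b -> approx a b -> tr a b.
Proof. by move=> sa sb h; apply/(wf_approx_tr HS) => //; apply: dpo_refl (wf_dpo HS) i. Qed.

Lemma tr_sym i (a b : st S i) : sin a -> sin b -> tr a b -> tr b a.
Proof. by move=> sa sb /(tr_approx sa sb) /approx_sym; apply: approx_tr. Qed.

Lemma approx_refl i (a : st S i) : sin a -> approx a a.
Proof. by move=> sa; apply: (tr_approx sa sa); apply: (wf_tr_refl HS). Qed.

Lemma tr_emb_refl i i' (p : ple i i') (a : st S i) : sin a -> tr (emb p a) a.
Proof.
by move=> sa; apply: (wf_tr_emb HS) => //; [apply: dpo_refl (wf_dpo HS) i | apply: (wf_tr_refl HS)].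
Qed.
End Systems.

Lemma wf_factor (I : preord) (S : rsys I) : is_dpo I -> is_factor S -> wf_system S.
Proof.
move=> dI [[[hle hrefl] hpre] [hE [hP [_ [_ [_ [_ [_ [hfE hfP]]]]]]]]].
constructor=> // i i' p.
- by case: (hE i i' p).
- by case: (hP i i' p).
- by case: (hE i i' p).
- by case: (hP i i' p).
Qed.

Lemma wf_propS : wf_system propS.
Proof.
constructor=> //; first exact: dpo_unit.
move=> i i' a' a _ _ _; split; first by case=> k [c [_ [_ [_ [/= -> ->]]]]].
by move=> /= ->; exists tt, a.
Qed.

Section FunctionSpace.
Variables (I J : preord) (M : rsys I) (N : rsys J).
Hypotheses (hM : wf_system M) (hN : wf_system N).
Local Notation FS := (funsp M N).

Let dI := wf_dpo hM.
Let dJ := wf_dpo hN.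
Let dIJ : is_dpo (prodp I J) := dpo_prod dI dJ.

Lemma fs_tr_refl ij (f : st FS ij) : sin f -> tr f f.
Proof.
move=> [sf af]; split; first exact: dpo_refl dI _.
split; first exact: dpo_refl dJ _.
move=> a' a sa' sa h; apply: (approx_tr hN (sf _ sa') (sf _ sa)).
by apply: af => //; apply: tr_approx h.
Qed.

(* [f' a'] and [f a] are both approximated by [c (emb a')], where [c]
   witnesses [f' ~ f]. *)
Lemma fs_approx_tr ij ij' (f' : st FS ij') (f : st FS ij) :
  ple ij ij' -> sin f' -> sin f -> approx f' f -> tr f' f.
Proof.
move=> [le1 le2] [sf' _] [sf _] [k [c [[sc _] [[k1 k2] [[_ k2'] [[_ [_ tc1]] [_ [_ tc2]]]]]]]].
do 2 (split => //); move=> a' a sa' sa ta.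
have se : sin (emb k1 a') by apply: (wf_emb_in hM).
have t1 : tr (c (emb k1 a')) (f' a') by apply: tc1 => //; apply: tr_emb_refl.
have t2 : tr (c (emb k1 a')) (f a) by apply: tc2 => //; apply: (wf_tr_emb hM).
apply/(wf_approx_tr hN) => //; [exact: sf' | exact: sf |].
by exists k.2, (c (emb k1 a')); split; first exact: sc.
Qed.

Lemma fs_approx_iff ij ij' (f' : st FS ij') (f : st FS ij) :
  ple ij ij' -> sin f' -> sin f -> (approx f' f <-> tr f' f).
Proof.
move=> hle sf' sf; split; first exact: fs_approx_tr.
move=> t; exists ij', f'; do 2 (split => //); first exact: dpo_refl dIJ _.
by do 2 split => //; apply: fs_tr_refl.
Qed.

Lemma fs_app_approx ij (f g : st FS ij) (a b : st M ij.1) :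
  sin f -> sin g -> approx f g -> sin a -> sin b -> approx a b -> approx (f a) (g b).
Proof.
move=> sf sg /(fs_approx_tr (dpo_refl dIJ ij) sf sg) [_ [_ t]] sa sb hab.
apply: (tr_approx hN (proj1 sf _ sa) (proj1 sg _ sb)).
exact: t _ _ sa sb (approx_tr hM sa sb hab).
Qed.

Lemma fs_approx_of_app ij (f g : st FS ij) : sin f -> sin g ->
  (forall a b, sin a -> sin b -> approx a b -> approx (f a) (g b)) -> approx f g.
Proof.
move=> sf sg h; exists ij, f; split => //; do 2 (split; first exact: dpo_refl dIJ _).
split; first exact: fs_tr_refl.
split; first exact: dpo_refl dI _.
split; first exact: dpo_refl dJ _.
move=> a' a sa' sa t; apply: (approx_tr hN (proj1 sf _ sa') (proj1 sg _ sa)).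
by apply: h => //; apply: tr_approx t.
Qed.

Lemma fs_emb_in ij ij' (p : ple ij ij') (f : st FS ij) : sin f -> sin (emb p f).
Proof.
move=> [sf af]; split=> [a sa | a b sa sb hab].
- by apply: (wf_emb_in hN); apply: sf; apply: (wf_proj_in hM).
- have spa := wf_proj_in hM (proj1 p) sa; have spb := wf_proj_in hM (proj1 p) sb.
  apply: (wf_emb_approx hN); [exact: sf | exact: sf |].
  by apply: af => //; apply: (wf_proj_approx hM).
Qed.

Lemma fs_proj_in ij ij' (p : ple ij ij') (f : st FS ij') : sin f -> sin (proj p f).
Proof.
move=> [sf af]; split=> [a sa | a b sa sb hab].
- by apply: (wf_proj_in hN); apply: sf; apply: (wf_emb_in hM).
- have sea := wf_emb_in hM (proj1 p) sa; have seb := wf_emb_in hM (proj1 p) sb.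
  apply: (wf_proj_approx hN); [exact: sf | exact: sf |].
  by apply: af => //; apply: (wf_emb_approx hM).
Qed.

Lemma fs_emb_approx ij ij' (p : ple ij ij') (f g : st FS ij) : sin f -> sin g -> approx f g ->
  approx (emb p f) (emb p g).
Proof.
move=> sf sg hfg; apply: fs_approx_of_app; try exact: fs_emb_in.
move=> a b sa sb hab.
have spa := wf_proj_in hM (proj1 p) sa; have spb := wf_proj_in hM (proj1 p) sb.
apply: (wf_emb_approx hN); [exact: (proj1 sf) | exact: (proj1 sg) |].
by apply: fs_app_approx => //; apply: (wf_proj_approx hM).
Qed.

Lemma fs_proj_approx ij ij' (p : ple ij ij') (f g : st FS ij') : sin f -> sin g -> approx f g ->
  approx (proj p f) (proj p g).
Proof.
move=> sf sg hfg; apply: fs_approx_of_app; try exact: fs_proj_in.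
move=> a b sa sb hab.
have sea := wf_emb_in hM (proj1 p) sa; have seb := wf_emb_in hM (proj1 p) sb.
apply: (wf_proj_approx hN); [exact: (proj1 sf) | exact: (proj1 sg) |].
by apply: fs_app_approx => //; apply: (wf_emb_approx hM).
Qed.

Lemma fs_tr_emb ij ij' ij'' (p : ple ij' ij'') (f' : st FS ij') (f : st FS ij) :
  ple ij ij' -> sin f' -> sin f -> tr f' f -> tr (emb p f') f.
Proof.
move=> _ [sf' _] [sf _] [t1 [t2 t3]].
split; first exact: (dpo_trans dI t1 (proj1 p)).
split; first exact: (dpo_trans dJ t2 (proj2 p)).
move=> a'' a sa'' sa t; have sp := wf_proj_in hM (proj1 p) sa''.
by apply: (wf_tr_emb hN) => //; [exact: sf' | exact: sf | apply: t3 => //; apply: (wf_tr_proj hM)].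
Qed.

Lemma fs_tr_proj ij ij' ij'' (p : ple ij' ij'') (f'' : st FS ij'') (f : st FS ij) :
  ple ij ij' -> sin f'' -> sin f -> tr f'' f -> tr (proj p f'') f.
Proof.
move=> [l1 l2] [sf'' _] [sf _] [_ [_ t3]]; do 2 (split => //).
move=> a' a sa' sa t; have se := wf_emb_in hM (proj1 p) sa'.
by apply: (wf_tr_proj hN) => //; [exact: sf'' | exact: sf | apply: t3 => //; apply: (wf_tr_emb hM)].
Qed.

Lemma wf_funsp : wf_system FS.
Proof.
constructor.
- exact: dIJ.
- exact: fs_tr_refl.
- by move=> ij ij' f' f _ _ [h1 [h2 _]].
- exact: fs_approx_iff.
- exact: fs_emb_in.
- exact: fs_proj_in.
- exact: fs_emb_approx.
- exact: fs_proj_approx.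
- exact: fs_tr_emb.
- exact: fs_tr_proj.
Qed.
End FunctionSpace.

Section DirectSystems.
Variables (I : preord) (S : rsys I).
Hypotheses (dI : is_dpo I) (hD : is_direct S).
Let hS := wf_factor dI (proj1 hD).

Lemma tr_trans i (x y z : st S i) : sin x -> sin y -> sin z -> tr x y -> tr y z -> tr x z.
Proof.
move=> sx sy sz hxy hyz; apply: (approx_tr hS sx sz).
exists i, y; split => //; split; first exact: dpo_refl dI _.
by split; [exact: dpo_refl dI _ | split => //; apply: tr_sym].
Qed.

(* Embedded at a common index, the witnesses [c] and [e] both approximate the
   embedding of [b] by directness, and [tr] is transitive at a single index. *)
Lemma direct_approx_trans i j l (a : st S i) (b : st S j) (d : st S l) :
  sin a -> sin b -> sin d -> approx a b -> approx b d -> approx a d.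
Proof.
move=> sa sb sd [k [c [sc [hik [hjk [tca tcb]]]]]] [m [e [se [hjm [hlm [teb ted]]]]]].
have [n [hkn hmn]] := dpo_ub dI k m.
have hjn := dpo_trans dI hjk hkn; have hln := dpo_trans dI hlm hmn.
have sc' := wf_emb_in hS hkn sc; have se' := wf_emb_in hS hmn se.
have seb := wf_emb_in hS hjn sb; have sed := wf_emb_in hS hln sd.
have cb : tr (emb hkn c) (emb hjn b).
  by apply: (approx_tr hS) => //; apply/(proj2 hD _ _ hjn) => //; apply: (wf_tr_emb hS).
have eb : tr (emb hmn e) (emb hjn b).
  by apply: (approx_tr hS) => //; apply/(proj2 hD _ _ hjn) => //; apply: (wf_tr_emb hS).
have ed : tr (emb hmn e) (emb hln d).
  by apply: (approx_tr hS) => //; apply/(proj2 hD _ _ hln) => //; apply: (wf_tr_emb hS).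
have ce : tr (emb hkn c) (emb hmn e) by apply: tr_trans cb (tr_sym hS se' seb eb).
have cd : tr (emb hkn c) d.
  by apply/(proj2 hD _ _ hln) => //; apply: (tr_approx hS) => //; apply: tr_trans ce ed.
exists n, (emb hkn c); split => //; split; first exact: (dpo_trans dI hik hkn).
by split => //; split => //; apply: (wf_tr_emb hS).
Qed.

Variables (F : filter_family) (L : rlim S).
Hypotheses (HF : is_filter_family F) (HL : is_limit F L).

(* The relation [y |> c ~ b] makes the carrier of [L] a target; the mediating
   map into [L] is then also an endomorphism of the limit [L], hence the
   identity. *)
Lemma ltr_approx i j (y : lcar L) (c : st S i) (b : st S j) :
  lin y -> sin c -> sin b -> ltr L y c -> approx c b -> ltr L y b.
Proof.
move=> ly sc sb lc acb.
pose N := @RLim I S (lcar L) lin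
  (fun j y (b : st S j) => sin b /\ exists k (c : st S k), sin c /\ ltr L y c /\ approx c b).
have [Ht Hu] := HL.
have HNt : is_target F N.
  move=> x lx; have [HFx Hcoh] := Ht x lx; split.
  - apply: (filter_weaken HF dI HFx) => i0 [a0 [sa0 la0]]; exists a0; split => //; split => //.
    by exists i0, a0; do 2 split => //; apply: approx_refl.
  - move=> i1 i1' a' a hle sa' sa [_ [k' [c' [sc' [lc' ac']]]]] [_ [k [c1 [sc1 [lc1 ac1]]]]].
    have [m [hkm hk'm]] := dpo_ub dI k k'.
    have [n [hmn [e [se le]]]] := filter_cofinal HF dI HFx m.
    have aec : approx e c1.
      by apply: tr_approx => //; apply: (Hcoh k n) => //; exact: (dpo_trans dI hkm hmn).
    have aec' : approx e c'.
      by apply: tr_approx => //; apply: (Hcoh k' n) => //; exact: (dpo_trans dI hk'm hmn).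
    have aea := direct_approx_trans se sc1 sa aec ac1.
    have aea' := direct_approx_trans se sc' sa' aec' ac'.
    by apply/(wf_approx_tr hS) => //; apply: direct_approx_trans sa' se sa (approx_sym aea') aea.
have [Phi [[Plin Pltr] _]] := Hu N HNt.
have [Phi0 [_ Puniq]] := Hu L Ht.
have e1 : y = Phi0 y := Puniq id (fun y h => h) (fun y i0 a0 _ _ h => h) y ly.
have e2 : Phi y = Phi0 y.
  apply: (Puniq Phi) => // y0 i0 a0 ly0 sa0 la0; apply: Pltr => //.
  by split => //; exists i0, a0; do 2 split => //; apply: approx_refl.
by rewrite e1 -e2; apply: Pltr => //; split => //; exists i, c.
Qed.

Lemma ltr_emb i j (p : ple i j) (y : lcar L) (a : st S i) :
  lin y -> sin a -> ltr L y a -> ltr L y (emb p a).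
Proof.
move=> ly sa la; have se := wf_emb_in hS p sa.
apply: (ltr_approx ly sa se la); apply: approx_sym; apply: tr_approx => //.
exact: tr_emb_refl.
Qed.
End DirectSystems.

Section Polarity.
Variable B : Type.

Definition polar (t : ty B) := tpos t \/ tneg t.
Definition posonly (t : ty B) := tpos t /\ ~ tneg t.
Definition negonly (t : ty B) := tneg t /\ ~ tpos t.

Lemma tpos_arr (s t : ty B) : tpos (tarr s t) -> tneg s /\ tpos t.
Proof. by move=> h; inversion h. Qed.

Lemma tneg_arr (s t : ty B) : tneg (tarr s t) -> tpos s /\ tneg t.
Proof. by move=> h; inversion h. Qed.

Lemma tneg_base (b : B) : ~ tneg (tbase b).
Proof. by move=> h; inversion h. Qed.

Lemma polar_arr (s t : ty B) : polar (tarr s t) -> polar s /\ polar t.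
Proof. by case=> [/tpos_arr | /tneg_arr] [h1 h2]; split; by [left | right]. Qed.

Lemma not_posonly t : ~ posonly t -> tpos t -> tneg t.
Proof. by move=> h hp; apply: NNPP => hn; apply: h. Qed.

Lemma not_negonly t : ~ negonly t -> tneg t -> tpos t.
Proof. by move=> h hn; apply: NNPP => hp; apply: h. Qed.

Variable IB : B -> preord.

(* The types that are both positive and negative are built from [tprop]
   alone, so their index sets are products of singletons. *)
Lemma ple_pos_neg (t : ty B) : tpos t -> tneg t -> forall i j : Ity IB t, ple i j.
Proof.
elim: t => [|b|s IHs u IHu] //=; first by move=> _ /tneg_base.
move=> /tpos_arr [ns pu] /tneg_arr [ps nu] [i1 i2] [j1 j2]; split; [exact: IHs | exact: IHu].
Qed.
End Polarity.

Section Semantics.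
Variables (B : Type) (IB : B -> preord) (BS : forall b, rsys (IB b))
  (BL : forall b, rlim (BS b)) (F : filter_family).
Hypotheses (HIB : forall b, is_dpo (IB b)) (HBS : forall b, is_direct (BS b))
  (HBL : forall b, is_limit F (BL b)) (HF : is_filter_family F).

Local Notation Ity := (Ity IB).
Local Notation semS := (semS BS).
Local Notation semL := (semL BL F).

Lemma dpo_Ity t : is_dpo (Ity t).
Proof. by elim: t => [|b|s IHs u IHu] /=; [exact: dpo_unit | exact: HIB | exact: dpo_prod]. Qed.

Lemma wf_semS t : wf_system (semS t).
Proof.
elim: t => [|b|s IHs u IHu] /=; first exact: wf_propS; last exact: wf_funsp.
exact: wf_factor (proj1 (HBS b)).
Qed.

Lemma lin_filter t (x : lcar (semL t)) : lin x ->
  @F (Ity t) (fun i => exists a : st (semS t) i, sin a /\ ltr (semL t) x a).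
Proof.
case: t x => [|b|s u] x /= lx.
- by apply: (filter_weaken HF dpo_unit (filter_full HF dpo_unit)) => i _; exists x.
- exact: (proj1 (proj1 (HBL b) x lx)).
- exact: (proj2 lx).
Qed.

(* [lin] without the filter condition of [funlim]: monotonicity is needed
   for abstractions before their filter condition is known. *)
Definition wlin (t : ty B) : lcar (semL t) -> Prop :=
  match t return lcar (semL t) -> Prop with
  | tarr s u => fun f => forall y, lin y -> lin (f y)
  | _ => fun x => lin x
  end.

Lemma wlin_lin t (x : lcar (semL t)) : lin x -> wlin x.
Proof. by case: t x => [|b|s u] x //= []. Qed.

Lemma ltr_mono t :
  (tpos t -> forall i j (p : ple i j) (x : lcar (semL t)) (a : st (semS t) i),
      wlin x -> sin a -> ltr (semL t) x a -> ltr (semL t) x (emb p a)) /\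
  (tneg t -> forall i j (p : ple j i) (x : lcar (semL t)) (a : st (semS t) i),
      wlin x -> sin a -> ltr (semL t) x a -> ltr (semL t) x (proj p a)).
Proof.
elim: t => [|b|s [IHs IHs'] u [IHu IHu']]; first by [].
- split; last by move=> h; case: (tneg_base h).
  by move=> _ i j p x a; apply: (ltr_emb (HIB b) (HBS b) HF (HBL b)).
- split=> [/tpos_arr [ns pu] | /tneg_arr [ps nu]] i j p f g lf sg lg /= x a lx sa la.
  + have spa := wf_proj_in (wf_semS s) (proj1 p) sa.
    have l2 := lg x _ lx spa (IHs' ns _ _ (proj1 p) x a (wlin_lin lx) sa la).
    exact: IHu pu _ _ _ _ _ (wlin_lin (lf x lx)) (proj1 sg _ spa) l2.
  + have sea := wf_emb_in (wf_semS s) (proj1 p) sa.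
    have l2 := lg x _ lx sea (IHs ps _ _ (proj1 p) x a (wlin_lin lx) sa la).
    exact: IHu' nu _ _ _ _ _ (wlin_lin (lf x lx)) (proj1 sg _ sea) l2.
Qed.

Lemma ltr_emb_pos t i j (p : ple i j) (x : lcar (semL t)) (a : st (semS t) i) :
  tpos t -> wlin x -> sin a -> ltr (semL t) x a -> ltr (semL t) x (emb p a).
Proof. by move=> /(proj1 (ltr_mono t)); apply. Qed.

Lemma ltr_proj_neg t i j (p : ple j i) (x : lcar (semL t)) (a : st (semS t) i) :
  tneg t -> wlin x -> sin a -> ltr (semL t) x a -> ltr (semL t) x (proj p a).
Proof. by move=> /(proj2 (ltr_mono t)); apply. Qed.

(* On polar types [lrel] is just [ltr] between limit elements and states
   ([lrel_of_ltr]); the last clause carries the induction through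
   applications at arbitrary types. *)
Fixpoint lrel (t : ty B) : forall i : Ity t, lcar (semL t) -> st (semS t) i -> Prop :=
  match t return forall i : Ity t, lcar (semL t) -> st (semS t) i -> Prop with
  | tprop => fun i x a => x = a
  | tbase b => fun i x a => lin x /\ sin a /\ ltr (BL b) x a
  | tarr s u => fun i f g => sin g /\ ltr (semL (tarr s u)) f g /\
       (polar (tarr s u) -> lin f) /\
       forall x (a : st (semS s) i.1), lrel x a -> lrel (f x) (g a)
  end.

Lemma lrel_in t i (x : lcar (semL t)) (a : st (semS t) i) : lrel x a -> sin a.
Proof. by case: t i x a => [|b|s u] i x a //= [? [? ?]]. Qed.

Lemma lrel_ltr t i (x : lcar (semL t)) (a : st (semS t) i) : lrel x a -> ltr (semL t) x a.
Proof. by case: t i x a => [|b|s u] i x a /=; [| case=> _ [] | case=> _ []]. Qed.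

Lemma lrel_lin t i (x : lcar (semL t)) (a : st (semS t) i) : polar t -> lrel x a -> lin x.
Proof.
case: t i x a => [|b|s u] i x a /= hp; first by []; first by case.
by case=> _ [_ [/(_ hp)]].
Qed.

Lemma lrel_of_ltr t i (x : lcar (semL t)) (a : st (semS t) i) :
  polar t -> lin x -> sin a -> ltr (semL t) x a -> lrel x a.
Proof.
elim: t i x a => [|b|s IHs u IHu] //= i x a hp lx sa la.
have [ps pu] := polar_arr hp.
do 2 (split => //); split=> [_ // | y b Ryb]; have ly := lrel_lin ps Ryb; have sb := lrel_in Ryb.
by apply: IHu => //; [exact: (proj1 lx y ly) | exact: (proj1 sa b sb) | exact: la (lrel_ltr Ryb)].
Qed.

Fixpoint env_rel (G : seq (ty B)) : forall C : CI IB G, LE BL F G -> SE BS C -> Prop :=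
  match G return forall C : CI IB G, LE BL F G -> SE BS C -> Prop with
  | [::] => fun _ _ _ => True
  | rho :: G' => fun C A a => ((polar rho -> lrel A.1 a.1) /\ sin a.1) /\ env_rel A.2 a.2
  end.

Fixpoint env_in (G : seq (ty B)) : forall C : CI IB G, SE BS C -> Prop :=
  match G return forall C : CI IB G, SE BS C -> Prop with
  | [::] => fun _ _ => True
  | rho :: G' => fun C a => sin a.1 /\ env_in a.2
  end.

Fixpoint env_approx (G : seq (ty B)) : forall C : CI IB G, SE BS C -> SE BS C -> Prop :=
  match G return forall C : CI IB G, SE BS C -> SE BS C -> Prop with
  | [::] => fun _ _ _ => True
  | rho :: G' => fun C a a' => approx a.1 a'.1 /\ env_approx a.2 a'.2
  end.

Lemma env_rel_nth G (C : CI IB G) (A : LE BL F G) (a : SE BS C) : env_rel A a ->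
  forall k, k < size G -> (polar (nth tprop G k) -> lrel (lnth A k) (snth a k)) /\ sin (snth a k).
Proof. by elim: G C A a => [|rho G IH] C A a //= [h1 h2] [|k] //= /(IH _ _ _ h2). Qed.

Lemma env_rel_snoc G rho (C : CI IB G) (A : LE BL F G) (a : SE BS C) (i : Ity rho)
  (x : lcar (semL rho)) (b : st (semS rho) i) :
  env_rel A a -> (polar rho -> lrel x b) -> sin b -> env_rel (lsnoc A x) (ssnoc a b).
Proof. by elim: G C A a => [|t G IH] C A a //= [h1 h2] hx sb; split => //; apply: IH. Qed.

Lemma env_rel_in G (C : CI IB G) (A : LE BL F G) (a : SE BS C) : env_rel A a -> env_in a.
Proof. by elim: G C A a => [|t G IH] C A a //= [[_ h1] /IH]. Qed.

Lemma env_rel_of G (C : CI IB G) (A : LE BL F G) (a : SE BS C) :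
  (forall k, k < size G -> polar (nth tprop G k)) ->
  (forall k, k < size G -> lin (lnth A k)) ->
  (forall k, k < size G -> sin (snth a k)) ->
  (forall k, k < size G -> ltr (semL (nth tprop G k)) (lnth A k) (snth a k)) ->
  env_rel A a.
Proof.
elim: G C A a => [|t G IH] C A a //= hp hl hs ht.
split; first by split=> [_ |]; [apply: lrel_of_ltr; [exact: (hp 0) | exact: (hl 0)
  | exact: (hs 0) | exact: (ht 0)] | exact: (hs 0)].
by apply: IH => k hk; [exact: (hp k.+1) | exact: (hl k.+1) | exact: (hs k.+1) | exact: (ht k.+1)].
Qed.

Lemma env_in_nth G (C : CI IB G) (a : SE BS C) : env_in a -> forall k, k < size G -> sin (snth a k).
Proof. by elim: G C a => [|rho G IH] C a //= [h1 h2] [|k] //= /(IH _ _ h2). Qed.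

Lemma env_in_snoc G rho (C : CI IB G) (a : SE BS C) (i : Ity rho) (b : st (semS rho) i) :
  env_in a -> sin b -> env_in (ssnoc a b).
Proof. by elim: G C a => [|t G IH] C a //= [h1 h2] sb; split => //; apply: IH. Qed.

Lemma env_approx_nth G (C : CI IB G) (a a' : SE BS C) : env_approx a a' ->
  forall k, k < size G -> approx (snth a k) (snth a' k).
Proof. by elim: G C a a' => [|rho G IH] C a a' //= [h1 h2] [|k] //= /(IH _ _ _ h2). Qed.

Lemma env_approx_snoc G rho (C : CI IB G) (a a' : SE BS C) (i : Ity rho) (b b' : st (semS rho) i) :
  env_approx a a' -> approx b b' -> env_approx (ssnoc a b) (ssnoc a' b').
Proof. by elim: G C a a' => [|t G IH] C a a' //= [h1 h2] hb; split => //; apply: IH. Qed.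

Lemma env_approx_refl G (C : CI IB G) (a : SE BS C) : env_in a -> env_approx a a.
Proof.
by elim: G C a => [|t G IH] C a //= [h1 /IH h2]; split => //; apply: (approx_refl (wf_semS t)).
Qed.

Lemma sv_in_approx G (C : CI IB G) r t (i : Ity t) (D : sder C r i) :
  (forall a : SE BS C, env_in a -> sin (sv D a)) /\
  (forall a a' : SE BS C, env_in a -> env_in a' -> env_approx a a' ->
     approx (sv D a) (sv D a')).
Proof.
elim: D => {G C r t i}.
- move=> G C k j hk hpol p; split=> [a sa | a a' sa sa' haa] /=.
  + by apply: (wf_emb_in (wf_semS _)); apply: env_in_nth.
  + apply: (wf_emb_approx (wf_semS _)); try exact: env_in_nth.
    exact: env_approx_nth.
- move=> G C k j hk hpol p; split=> [a sa | a a' sa sa' haa] /=.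
  + by apply: (wf_proj_in (wf_semS _)); apply: env_in_nth.
  + apply: (wf_proj_approx (wf_semS _)); try exact: env_in_nth.
    exact: env_approx_nth.
- move=> G C r s rho sig i j D1 [IH1 IH1'] D2 [IH2 IH2']; split=> [a sa | a a' sa sa' haa] /=.
  + exact: (proj1 (IH1 a sa) _ (IH2 a sa)).
  + exact: (fs_app_approx (wf_semS rho) (wf_semS sig) (IH1 a sa) (IH1 a' sa')
      (IH1' a a' sa sa' haa) (IH2 a sa) (IH2 a' sa') (IH2' a a' sa sa' haa)).
- move=> G C rho r sig i j D1 [IH1 IH1'].
  have sl a0 : env_in a0 -> @sin _ (semS (tarr rho sig)) (i, j) (fun b => sv D1 (ssnoc a0 b)).
    move=> sa0; split=> [b sb | b b' sb sb' hb]; first by apply: IH1; apply: env_in_snoc.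
    apply: IH1'; try exact: env_in_snoc.
    by apply: env_approx_snoc => //; apply: env_approx_refl.
  split=> [a sa | a a' sa sa' haa] /=; first exact: sl.
  apply: (fs_approx_of_app (wf_semS rho) (wf_semS sig) (sl a sa) (sl a' sa')).
  move=> b b' sb sb' hb; apply: IH1'; try exact: env_in_snoc.
  exact: env_approx_snoc.
Qed.

Lemma sv_in G (C : CI IB G) r t (i : Ity t) (D : sder C r i) (a : SE BS C) :
  env_in a -> sin (sv D a).
Proof. exact: (proj1 (sv_in_approx D)). Qed.

Fixpoint cidx_le (G : seq (ty B)) : CI IB G -> CI IB G -> Prop :=
  match G return CI IB G -> CI IB G -> Prop with
  | [::] => fun _ _ => True
  | rho :: G' => fun C' C => ((tpos rho -> ple C'.1 C.1) /\ (tneg rho -> ple C.1 C'.1)) /\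
                             cidx_le C'.2 C.2
  end.

Lemma cidx_le_nth G (C' C : CI IB G) : cidx_le C' C -> forall k, k < size G ->
  (tpos (nth tprop G k) -> ple (cnth C' k) (cnth C k)) /\
  (tneg (nth tprop G k) -> ple (cnth C k) (cnth C' k)).
Proof. by elim: G C' C => [|rho G IH] C' C //= [h1 h2] [|k] //= /(IH _ _ h2). Qed.

Lemma cidx_le_snoc G rho (C' C : CI IB G) (i' i : Ity rho) :
  cidx_le C' C -> (tpos rho -> ple i' i) -> (tneg rho -> ple i i') ->
  cidx_le (csnoc C' i') (csnoc C i).
Proof. by elim: G C' C => [|t G IH] C' C //= [h1 h2] h3 h4; split => //; apply: IH. Qed.

Lemma cidx_le_refl G (C : CI IB G) : cidx_le C C.
Proof.
by elim: G C => [|t G IH] C //=; split => //; split => _; apply: dpo_refl (dpo_Ity t) _.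
Qed.

Lemma cidx_le_last G rho (C : CI IB G) (i' i : Ity rho) :
  (tpos rho -> ple i' i) -> (tneg rho -> ple i i') -> cidx_le (csnoc C i') (csnoc C i).
Proof. exact: cidx_le_snoc (cidx_le_refl C). Qed.

Lemma sder_cidx_le G (C : CI IB G) r t (i : Ity t) :
  sder C r i -> forall C', cidx_le C' C -> sder C' r i.
Proof.
elim=> {G C r t i} [G C k j hk hp hle | G C k j hk hn hle | G C r s rho sig i j _ IH1 _ IH2
  | G C rho r sig i j _ IH1] C' hC.
- by apply: sd_var_pos => //; exact: (dpo_trans (dpo_Ity _) (proj1 (cidx_le_nth hC hk) hp) hle).
- by apply: sd_var_neg => //; exact: (dpo_trans (dpo_Ity _) hle (proj2 (cidx_le_nth hC hk) hn)).
- exact: sd_app (IH1 C' hC) (IH2 C' hC).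
- by apply: sd_lam; apply: IH1; apply: cidx_le_snoc => // _; apply: dpo_refl (dpo_Ity _) _.
Qed.

(* [neg_lower i' i]: [i'] arises from [i] by lowering the index of a negative
   type met along the chain of codomains of [t]. *)
Fixpoint neg_lower (t : ty B) : Ity t -> Ity t -> Prop :=
  match t return Ity t -> Ity t -> Prop with
  | tarr s u => fun i' i => (tneg (tarr s u) /\ ple i' i) \/ (i'.1 = i.1 /\ neg_lower i'.2 i.2)
  | t0 => fun i' i => tneg t0 /\ ple i' i
  end.

Lemma neg_lower_intro t (i' i : Ity t) : tneg t -> ple i' i -> neg_lower i' i.
Proof. by case: t i' i => [|b|s u] i' i /= hn hle; [| split | left]. Qed.

Lemma neg_lower_ple t (i' i : Ity t) : neg_lower i' i -> ple i' i.
Proof.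
elim: t i' i => [|b|s IHs u IHu] //= => [i' i [] // | [i1 i2] [j1 j2] /= [[_ h] // | [-> h]]].
by split; [apply: dpo_refl (dpo_Ity s) _ | exact: IHu].
Qed.

Lemma neg_lower_pos t (i' i c : Ity t) : tpos t -> neg_lower i' i -> ple c i -> ple c i'.
Proof.
elim: t i' i c => [|b|s IHs u IHu] //=; first by move=> i' i c _ [h]; case: (tneg_base h).
move=> [i1 i2] [j1 j2] [c1 c2] /= hp [[hn _] | [-> h]] [h1 h2];
  have [ns pu] := tpos_arr hp.
- by have [ps nu] := tneg_arr hn; split; apply: ple_pos_neg.
- by split => //; apply: IHu h h2.
Qed.

Lemma sder_neg_lower G (C : CI IB G) r t (i : Ity t) :
  sder C r i -> forall i', neg_lower i' i -> inhabited (sder C r i').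
Proof.
elim=> {G C r t i} [G C k j hk hp hle | G C k j hk hn hle | G C r s rho sig i j D1 IH1 D2 _
  | G C rho r sig i j D1 IH1] j' hj.
- by constructor; apply: sd_var_pos => //; apply: neg_lower_pos hp hj hle.
- by constructor; apply: sd_var_neg => //; exact: (dpo_trans (dpo_Ity _) (neg_lower_ple hj) hle).
- by have [D1'] := IH1 (i, j') (or_intror (conj erefl hj)); constructor; apply: sd_app D1' D2.
- case: j' hj => [i' j'] /= [[hn [h1 h2]] | [/= -> h]].
  + have [ps ns] := tneg_arr hn; have [D1'] := IH1 j' (neg_lower_intro ns h2).
    constructor; apply: sd_lam; apply: (sder_cidx_le D1').
    by apply: cidx_le_last => // nr; apply: ple_pos_neg.
  + by have [D1'] := IH1 j' h; constructor; apply: sd_lam.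
Qed.

Fixpoint large (t : ty B) : (Ity t -> Prop) -> Prop :=
  match t return (Ity t -> Prop) -> Prop with
  | tprop => fun P => exists i, P i
  | tbase b => fun P => exists i0, forall i, ple i0 i -> P i
  | tarr s u => fun P => forall Q, large Q -> large (fun j => exists k, Q k /\ P (k, j))
  end.

Lemma large_weaken t (P P' : Ity t -> Prop) : (forall x, P x -> P' x) -> large P -> large P'.
Proof.
elim: t P P' => [|b|s IHs u IHu] P P' /= hPP'.
- by case=> i /hPP'; exists i.
- by case=> i0 h; exists i0 => i /h /hPP'.
- move=> h Q /h; apply: IHu => j [k [Qk /hPP' Pkj]]; by exists k.
Qed.

Lemma large_up_cofinal t :
  (forall i : Ity t, large (ple i)) /\ (forall P : Ity t -> Prop, large P -> cofinal P).
Proof.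
elim: t => [|b|s [IHs IHs'] u [IHu IHu']] /=.
- by split=> [i | P [i hi] j]; exists i.
- split=> [i | P [i0 h] i]; first by exists i.
  by have [k [h1 h2]] := dpo_ub (HIB b) i0 i; exists k; split => //; apply: h.
- split=> [[i1 i2] Q /IHs' /(_ i1) [k [hk Qk]] | P hP [i1 i2]].
  + by apply: large_weaken (IHu i2) => j hj; exists k.
  + have [j [hj [k [hk hkj]]]] := IHu' _ (hP _ (IHs i1)) i2.
    by exists (k, j).
Qed.

Lemma large_up t (i : Ity t) : large (ple i).
Proof. exact: (proj1 (large_up_cofinal t)). Qed.

Lemma large_cofinal t (P : Ity t -> Prop) : large P -> cofinal P.
Proof. exact: (proj2 (large_up_cofinal t)). Qed.

Lemma large_full t : large (fun _ : Ity t => True).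
Proof. by case: (dpo_inhabited (dpo_Ity t)) => i; apply: large_weaken (large_up i). Qed.

Definition isets G := hlist (fun t => pcar (Ity t) -> Prop) G.

Definition isnoc G rho (W : isets G) (Q : Ity rho -> Prop) : isets (rcons G rho) :=
  hsnoc (P := fun t => pcar (Ity t) -> Prop) W Q.

Fixpoint negonly_cofinal (G : seq (ty B)) : isets G -> Prop :=
  match G return isets G -> Prop with
  | [::] => fun _ => True
  | rho :: G' => fun W => (negonly rho -> cofinal W.1) /\ negonly_cofinal W.2
  end.

Fixpoint pos_raise (G : seq (ty B)) : CI IB G -> CI IB G -> Prop :=
  match G return CI IB G -> CI IB G -> Prop with
  | [::] => fun _ _ => True
  | rho :: G' => fun C C' =>
      ((posonly rho -> ple C.1 C'.1) /\ (~ posonly rho -> C'.1 = C.1)) /\ pos_raise C.2 C'.2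
  end.

Definition neg_step (rho : ty B) (Q : Ity rho -> Prop) (c c' : Ity rho) :=
  (negonly rho -> ple c c' /\ (c' = c \/ Q c')) /\ (~ negonly rho -> c' = c).

Fixpoint neg_raise (G : seq (ty B)) : isets G -> CI IB G -> CI IB G -> Prop :=
  match G return isets G -> CI IB G -> CI IB G -> Prop with
  | [::] => fun _ _ _ => True
  | rho :: G' => fun W C C' => neg_step W.1 C.1 C'.1 /\ neg_raise W.2 C.2 C'.2
  end.

Lemma negonly_cofinal_snoc G rho (W : isets G) (Q : Ity rho -> Prop) :
  negonly_cofinal W -> (negonly rho -> cofinal Q) -> negonly_cofinal (isnoc W Q).
Proof. by elim: G W => [|t G IH] W //= [h1 h2] h3; split => //; apply: IH. Qed.

Lemma pos_raise_refl G (C : CI IB G) : pos_raise C C.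
Proof.
by elim: G C => [|t G IH] C //=; split => //; split => // _; apply: dpo_refl (dpo_Ity t) _.
Qed.

Lemma pos_raise_snoc G rho (C CP : CI IB G) (i i' : Ity rho) : pos_raise C CP ->
  (posonly rho -> ple i i') -> (~ posonly rho -> i' = i) -> pos_raise (csnoc C i) (csnoc CP i').
Proof. by elim: G C CP => [|t G IH] C CP //= [h1 h2] h3 h4; split => //; apply: IH. Qed.

Lemma neg_step_refl rho (Q : Ity rho -> Prop) c : neg_step Q c c.
Proof. by split=> // _; split; [apply: dpo_refl (dpo_Ity rho) _ | left]. Qed.

Lemma neg_raise_refl G (W : isets G) (C : CI IB G) : neg_raise W C C.
Proof. by elim: G W C => [|t G IH] W C //=; split => //; apply: neg_step_refl. Qed.

Lemma neg_raise_snoc_inv G rho (W : isets G) Q (C C' : CI IB G) (i i' : Ity rho) :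
  neg_raise (isnoc W Q) (csnoc C i) (csnoc C' i') -> neg_raise W C C' /\ neg_step Q i i'.
Proof. by elim: G W C C' => [|t G IH] W C C' /= [] // h1 /IH [h2 h3]. Qed.

Lemma csnoc_surj G rho (C : CI IB (rcons G rho)) : exists C' (i : Ity rho), C = csnoc C' i.
Proof.
elim: G C => [|t G IH] /= [c C]; first by case: C; exists tt, c.
by have [C' [i ->]] := IH C; exists (c, C'), i.
Qed.

Lemma neg_raise_above G (W : isets G) (C : CI IB G) : negonly_cofinal W ->
  forall k, k < size G -> negonly (nth tprop G k) -> forall j : Ity (nth tprop G k),
  exists C', neg_raise W C C' /\ ple j (cnth C' k).
Proof.
elim: G W C => [|rho G IH] W C //= [h1 h2] [|k] /= hk hn j.
- have [u [hu1 hu2]] := dpo_ub (dpo_Ity rho) j C.1.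
  have [c [hc Wc]] := h1 hn u.
  exists (c, C.2); split; last exact: (dpo_trans (dpo_Ity _) hu1 hc).
  split; last exact: neg_raise_refl.
  by split=> [_ | /(_ hn) //]; split; [exact: (dpo_trans (dpo_Ity _) hu2 hc) | right].
- have [C' [h3 h4]] := IH W.2 C.2 h2 k hk hn j.
  by exists (C.1, C'); do 2 split => //; apply: neg_step_refl.
Qed.

Lemma neg_raise_merge G (W : isets G) (C C1 C2 : CI IB G) : negonly_cofinal W ->
  neg_raise W C C1 -> neg_raise W C C2 ->
  exists C3, neg_raise W C C3 /\ cidx_le C3 C1 /\ cidx_le C3 C2.
Proof.
elim: G W C C1 C2 => [|rho G IH] W C C1 C2 /=; first by exists tt.
move=> [hW1 hW2] [[n1 e1] m1] [[n2 e2] m2].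
have [C3 [m3 [l1 l2]]] := IH W.2 C.2 C1.2 C2.2 hW2 m1 m2.
have ple_refl := dpo_refl (dpo_Ity rho).
have [hn | hn] := classic (negonly rho); last first.
  exists (C.1, C3); rewrite (e1 hn) (e2 hn).
  split; first by split => //; apply: neg_step_refl.
  by split; split => //; split => _; apply: ple_refl.
have [[p1 _] [p2 _]] := (n1 hn, n2 hn).
have [u [hu1 hu2]] := dpo_ub (dpo_Ity rho) C1.1 C2.1.
have [c [hc Wc]] := hW1 hn u.
have np : ~ tpos rho by case: hn.
exists (c, C3); split; first split => //.
- split=> [_ | /(_ hn) //]; split; last by right.
  exact: (dpo_trans (dpo_Ity _) p1 (dpo_trans (dpo_Ity _) hu1 hc)).
- split; (split; last done); split=> [/np // | _].
  + exact: (dpo_trans (dpo_Ity _) hu1 hc).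
  + exact: (dpo_trans (dpo_Ity _) hu2 hc).
Qed.

Definition reach G (W : isets G) (C : CI IB G) r t : Ity t -> Prop :=
  fun j => exists C', neg_raise W C C' /\ inhabited (sder C' r j).

Definition reach_large G (C : CI IB G) r t :=
  forall W CP, negonly_cofinal W -> pos_raise C CP -> large (@reach G W CP r t).

Lemma reach_large_var G (C : CI IB G) k :
  k < size G -> polar (nth tprop G k) -> reach_large C (var k) (nth tprop G k).
Proof.
move=> hk hpol W CP hW _.
have [hp | hp] := classic (tpos (nth tprop G k));
  have [hn | hn] := classic (tneg (nth tprop G k)).
- apply: large_weaken (large_full _) => j _; exists CP; split; first exact: neg_raise_refl.
  by constructor; apply: sd_var_pos => //; apply: ple_pos_neg.
- apply: large_weaken (large_up (cnth CP k)) => j hj; exists CP.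
  by split; [exact: neg_raise_refl | constructor; apply: sd_var_pos].
- apply: large_weaken (large_full _) => j _.
  have [C' [hm hle]] := neg_raise_above CP hW hk (conj hn hp) j.
  by exists C'; split => //; constructor; apply: sd_var_neg.
- by case: hpol.
Qed.

Lemma reach_large_app G (C : CI IB G) r s rho sig :
  reach_large C r (tarr rho sig) -> reach_large C s rho -> reach_large C (app r s) sig.
Proof.
move=> h1 h2 W CP hW hPM.
apply: large_weaken (h1 W CP hW hPM _ (h2 W CP hW hPM)) => j [k [[C2 [m2 [D2]]] [C1 [m1 [D1]]]]].
have [C3 [m3 [l1 l2]]] := neg_raise_merge hW m1 m2.
by exists C3; split => //; constructor; apply: (sd_app (sder_cidx_le D1 l1) (sder_cidx_le D2 l2)).
Qed.

(* A new bound variable of positive-only type is placed in the given large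
   set [Q]; one of negative-only type may later be raised into [Q]. *)
Lemma reach_large_lam G (C : CI IB G) rho r sig (i : Ity rho) :
  reach_large (csnoc C i) r sig -> reach_large C (lam (size G) rho r) (tarr rho sig).
Proof.
move=> IH W CP hW hPM /= Q /large_cofinal cQ.
have [k0 [Qk0 hk0]] : exists k0, (posonly rho -> Q k0) /\ pos_raise (csnoc C i) (csnoc CP k0).
  have [hpo | hpo] := classic (posonly rho).
  - have [k [hik Qk]] := cQ i.
    by exists k; split => //; apply: pos_raise_snoc => // /(_ hpo).
  - by exists i; split => //; apply: pos_raise_snoc => // /hpo.
have hW' := negonly_cofinal_snoc hW (fun _ => cQ).
apply: large_weaken (IH _ _ hW' hk0) => j [C'' [m'' [D'']]].
have [C' [k' e]] := csnoc_surj C''; subst C''.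
have [m' [hl1 hl2]] := neg_raise_snoc_inv m''.
suff [q [Qq [hqp hqn]]] : exists q, Q q /\ (tpos rho -> ple q k') /\ (tneg rho -> ple k' q).
  exists q; split => //; exists C'; split => //; constructor; apply: sd_lam.
  by apply: (sder_cidx_le D''); apply: cidx_le_last.
have [hno | hno] := classic (negonly rho).
  have [q [hq Qq]] := cQ k'.
  by exists q; split => //; split => // hp; case: hno.
rewrite (hl2 hno); have [hpo | hpo] := classic (posonly rho).
  exists k0; split; first exact: Qk0.
  by split=> [_ | hn]; [apply: dpo_refl (dpo_Ity rho) _ | case: hpo].
have [q Qq] := cofinal_exists (dpo_Ity rho) cQ.
exists q; split => //; split=> [hp | hn]; apply: ple_pos_neg => //.
- exact: not_posonly hp.
- exact: not_negonly hn.
Qed.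

Lemma sder_reach_large G (C : CI IB G) r t (i : Ity t) : sder C r i -> reach_large C r t.
Proof.
elim=> {G C r t i} [G C k j hk hp _ | G C k j hk hn _ | G C r s rho sig i j _ IH1 _ IH2
  | G C rho r sig i j _ IH].
- by apply: reach_large_var => //; left.
- by apply: reach_large_var => //; right.
- exact: reach_large_app IH1 IH2.
- exact: reach_large_lam IH.
Qed.

Fixpoint lin_sets (G : seq (ty B)) : LE BL F G -> isets G :=
  match G return LE BL F G -> isets G with
  | [::] => fun _ => tt
  | rho :: G' => fun A =>
      ((fun c => exists b : st (semS rho) c, sin b /\ ltr (semL rho) A.1 b), lin_sets A.2)
  end.

Lemma lin_sets_cofinal G (C : CI IB G) (A : LE BL F G) (a : SE BS C) :
  env_rel A a -> negonly_cofinal (lin_sets A).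
Proof.
elim: G C A a => [|t G IH] C A a //= [[h1 _] /IH h2]; split=> // - [hn _].
by apply: (filter_cofinal HF (dpo_Ity t)); apply: lin_filter; apply: lrel_lin (h1 _); right.
Qed.

Lemma env_rel_raise G (C : CI IB G) (A : LE BL F G) (a : SE BS C) : env_rel A a ->
  forall C', neg_raise (lin_sets A) C C' -> exists a' : SE BS C', env_rel A a'.
Proof.
elim: G C A a => [|t G IH] C A a /=; first by exists tt.
move=> [[h1 h2] h3] [c' C0'] /= [[hn he] hm].
have [a0' ha0'] := IH C.2 A.2 a.2 h3 C0' hm.
have [hno | hno] := classic (negonly t); last by rewrite (he hno); exists (a.1, a0').
have [_ [-> | [b [sb lb]]]] := hn hno; first by exists (a.1, a0').
exists (b, a0'); split => //; split => // hp; apply: lrel_of_ltr => //.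
by apply: lrel_lin (h1 _); right; case: hno.
Qed.

(* The argument type in an application node of a state derivation agrees with
   that of the typing derivation, since both equal what [type_of] computes. *)
Fixpoint type_of (G : seq (ty B)) (r : tm B) : option (ty B) :=
  match r with
  | var k => if k < size G then Some (nth tprop G k) else None
  | app r1 _ => if type_of G r1 is Some (tarr _ u) then Some u else None
  | lam _ rho r1 => if type_of (rcons G rho) r1 is Some u then Some (tarr rho u) else None
  end.

Lemma typing_type_of G r t : typing G r t -> type_of G r = Some t.
Proof. by elim=> {G r t} [G k /= -> | G r s rho sig _ /= -> | G rho r sig _ /= ->]. Qed.

Lemma sder_type_of G (C : CI IB G) r t (i : Ity t) : sder C r i -> type_of G r = Some t.
Proof.
by elim=> {G C r t i} [G C k j /= -> | G C k j /= -> | G C r s rho sig i j _ /= ->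
  | G C rho r sig i j _ /= ->].
Qed.

Lemma sder_lam_inv G (C : CI IB G) rho r sig (i : Ity rho) (j : Ity sig) :
  sder C (lam (size G) rho r) (rho := tarr rho sig) (i, j) -> inhabited (sder (csnoc C i) r j).
Proof. by move=> D; dependent destruction D; constructor. Qed.

Definition sound G r t (T : typing G r t) :=
  forall (C : CI IB G) (i : Ity t) (D : sder C r i) (A : LE BL F G) (a : SE BS C),
    env_rel A a -> lrel (lv T A) (sv D a).

Lemma sound_var G k (hk : k < size G) : sound (ty_var hk).
Proof.
move=> C i D A a hA; have [hR hs] := env_rel_nth hA hk.
have lin_Ak (hpol : polar (nth tprop G k)) := lrel_lin hpol (hR hpol).
dependent destruction D => /=.
- have hpol : polar (nth tprop G k) by left.
  apply: lrel_of_ltr => //; first by apply: lin_Ak.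
  + exact: (wf_emb_in (wf_semS _) _ hs).
  + exact: (ltr_emb_pos p t (wlin_lin (lin_Ak hpol)) hs (lrel_ltr (hR hpol))).
- have hpol : polar (nth tprop G k) by right.
  apply: lrel_of_ltr => //; first by apply: lin_Ak.
  + exact: (wf_proj_in (wf_semS _) _ hs).
  + exact: (ltr_proj_neg p t (wlin_lin (lin_Ak hpol)) hs (lrel_ltr (hR hpol))).
Qed.

Lemma sound_app G r s rho sig (T1 : typing G r (tarr rho sig)) (T2 : typing G s rho) :
  sound T1 -> sound T2 -> sound (ty_app T1 T2).
Proof.
move=> IH1 IH2 C j D A a hA; dependent destruction D => /=.
have := sder_type_of D1; rewrite (typing_type_of T1) => -[e]; subst rho0.
have [_ [_ [_ IH1']]] := IH1 C _ D1 A a hA.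
exact: IH1' _ _ (IH2 C _ D2 A a hA).
Qed.

Section Lambda.
Variables (G : seq (ty B)) (rho sig : ty B) (r : tm B) (T : typing (rcons G rho) r sig).
Hypothesis IH : sound T.
Variable A : LE BL F G.

Let dpo_arr := dpo_Ity (tarr rho sig).

Lemma lam_ltr C (i : Ity rho) (j : Ity sig) (D : sder (csnoc C i) r j) (a : SE BS C) :
  env_rel A a -> ltr (semL (tarr rho sig)) (lv (ty_lam T) A) (sv (sd_lam D) a).
Proof.
move=> hA x b lx sb lb; apply: lrel_ltr; apply: (IH D); apply: (env_rel_snoc hA) => // hp.
exact: lrel_of_ltr.
Qed.

Lemma lam_lin_body C (i : Ity rho) (j : Ity sig) (D : sder (csnoc C i) r j) (a : SE BS C)
  x (b : st (semS rho) i) :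
  polar sig -> env_rel A a -> lin x -> sin b -> ltr (semL rho) x b -> lin (lv T (lsnoc A x)).
Proof.
move=> ps hA lx sb lb.
have hAb : env_rel (lsnoc A x) (ssnoc a b) by apply: env_rel_snoc => // hp; apply: lrel_of_ltr.
exact: lrel_lin ps (IH D hAb).
Qed.

Lemma lam_lin_pos C (i : Ity rho) (j : Ity sig) (D : sder (csnoc C i) r j) (a : SE BS C) :
  tpos (tarr rho sig) -> env_rel A a -> lin (lv (ty_lam T) A).
Proof.
move=> hpos hA; have [nr ps] := tpos_arr hpos.
have wlin_f : forall x, lin x -> lin (lv T (lsnoc A x)).
  move=> x lx.
  have [i' [hii' [b [sb lb]]]] := filter_cofinal HF (dpo_Ity rho) (lin_filter lx) i.
  apply: (lam_lin_body D (b := proj hii' b) (or_introl ps) hA lx).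
  - exact: (wf_proj_in (wf_semS rho) hii' sb).
  - exact: (ltr_proj_neg hii' nr (wlin_lin lx) sb lb).
split=> //; apply: (filter_weaken HF dpo_arr (filter_up HF dpo_arr (i, j))) => ij' hij'.
have sg := sv_in (sd_lam D) (env_rel_in hA).
exists (emb hij' (sv (sd_lam D) a)); split; first exact: (wf_emb_in (wf_semS (tarr rho sig))).
exact: (ltr_emb_pos hij' hpos wlin_f sg (lam_ltr D hA)).
Qed.

(* At a negative function type every index is reached: above it lies a
   derivable index (the reachable set is large), and lowering is allowed. *)
Lemma lam_derivable C (i : Ity rho) (j : Ity sig) (D : sder (csnoc C i) r j) (a : SE BS C) :
  tneg (tarr rho sig) -> env_rel A a -> forall (i' : Ity rho) (j' : Ity sig),
  exists C' (a' : SE BS C'), env_rel A a' /\ inhabited (sder (csnoc C' i') r j').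
Proof.
move=> hneg hA i' j'.
have large_reach := sder_reach_large (sd_lam D) (lin_sets_cofinal hA) (pos_raise_refl C).
have [[i3 j3] [[h1 h2] [C' [hm [D3]]]]] := large_cofinal large_reach (i', j').
have [D4] := sder_neg_lower D3 (i' := ((i', j') : Ity (tarr rho sig)))
  (or_introl (conj hneg (conj h1 h2))).
have [D5] := sder_lam_inv D4.
by have [a' hA'] := env_rel_raise hA hm; exists C', a'.
Qed.

Lemma lam_lin_neg C (i : Ity rho) (j : Ity sig) (D : sder (csnoc C i) r j) (a : SE BS C) :
  tneg (tarr rho sig) -> env_rel A a -> lin (lv (ty_lam T) A).
Proof.
move=> hneg hA; have [pr ns] := tneg_arr hneg.
have hall := lam_derivable D hneg hA.
split=> [x lx | ].
  have [i' [b [sb lb]]] :=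
    cofinal_exists (dpo_Ity rho) (filter_cofinal HF (dpo_Ity rho) (lin_filter lx)).
  have [C' [a' [hA' [D']]]] := hall i' j.
  exact: (lam_lin_body D' (or_intror ns) hA' lx sb lb).
apply: (filter_weaken HF dpo_arr (filter_full HF dpo_arr)) => -[i' j'] _.
have [C' [a' [hA' [D']]]] := hall i' j'.
exists (sv (sd_lam D') a'); split; last exact: lam_ltr.
exact: (sv_in (sd_lam D') (env_rel_in hA')).
Qed.
End Lambda.

Lemma sound_lam G rho sig r (T : typing (rcons G rho) r sig) : sound T -> sound (ty_lam T).
Proof.
move=> IH C ij D A a hA; dependent destruction D.
split; first exact: (sv_in (sd_lam D) (env_rel_in hA)).
split; first exact: (lam_ltr IH D hA).
split=> [[hp | hn] | x b Rxb].
- exact: (lam_lin_pos IH D hp hA).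
- exact: (lam_lin_neg IH D hn hA).
- by apply: IH; apply: env_rel_snoc => //; apply: lrel_in Rxb.
Qed.

Lemma typing_sound G r t (T : typing G r t) : sound T.
Proof.
elim: T => {G r t} [G k hk | G r s rho sig T1 IH1 T2 IH2 | G rho r sig T IH].
- exact: sound_var.
- exact: sound_app.
- exact: sound_lam.
Qed.
End Semantics.

Theorem theorem3p9
  (B : Type) (IB : B -> preord) (BS : forall b : B, rsys (IB b))
  (BL : forall b : B, rlim (BS b)) (F : filter_family)
  (HIB : forall b, is_dpo (IB b))
  (HBS : forall b, is_direct (BS b))
  (HBL : forall b, is_limit F (BL b))
  (HF : is_filter_family F) (HD : condD F)
  (G : seq (ty B))
  (HG : forall k, k < size G -> tpos (nth tprop G k) \/ tneg (nth tprop G k))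
  (r : tm B) (rho : ty B) (T : typing G r rho)
  (C : CI IB G) (i : Ity IB rho) (D : sder C r i)
  (A : LE BL F G) (a : SE BS C)
  (HA : forall k, k < size G -> lin (lnth A k))
  (Ha : forall k, k < size G -> sin (snth a k))
  (HAa : forall k, k < size G -> ltr (semL BL F (nth tprop G k)) (lnth A k) (snth a k)) :
  ltr (semL BL F rho) (lv T A) (sv D a).
Proof.
apply: lrel_ltr; apply: (typing_sound HIB HBS HBL HF T D).
exact: env_rel_of.
Qed.
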